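(* Let $0<\varepsilon\le1/2$, let $X\subset\mathbb{R}^d$ be a finite nonempty (multi)set with $n=|X|$, and $C\subset\mathbb{R}^d$ a finite nonempty set. For $x\in X$ let $c(x)\in C$ be a nearest point of $C$ to $x$. Define $R^2=\frac{\varepsilon^2}{41}\cdot\frac{\Phi(C,X)}{n}$, $X^{near}=\{x\in X:\|x-c(x)\|\le R\}$, $X^{far}=X\setminus X^{near}$, and the multiset $X' = X^{far}\cup\{c(x):x\in X^{near}\}$. If $m''\in\mathbb{R}^d$ satisfies $\Phi(m'',X')\le(1+\frac{\varepsilon}{16})\Delta(X')$, then $\Phi(m'',X)\le(1+\frac\varepsilon2)\Delta(X)$.
   Context: $\mu(Y)$ denotes the centroid of a finite multiset $Y$, $\Delta(Y)=\sum_{y\in Y}\|y-\mu(Y)\|^2$. For a point $p$, $\Phi(p,Y)=\sum_{y\in Y}\|y-p\|^2$; for a finite set $C$, $\Phi(C,Y)=\sum_{y\in Y}\min_{c\in C}\|y-c\|^2$. *)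

(* Points of R^d are row vectors 'rV[R]_d over a real closed
   field R (covers the real numbers). A finite multiset of n points is an
   indexed family 'I_n -> 'rV[R]_d. *)
From HB Require Import structures.
From mathcomp Require Import all_boot all_order all_algebra.
Set Implicit Arguments. Unset Strict Implicit. Unset Printing Implicit Defensive.
Import Order.TTheory GRing.Theory Num.Theory.
Local Open Scope ring_scope.

Section Defs.
Variables (R : rcfType) (d : nat).

Definition sqnorm (v : 'rV[R]_d) : R := \sum_(i < d) (v 0 i) ^+ 2.
Definition enorm (v : 'rV[R]_d) : R := Num.sqrt (sqnorm v).

Definition centroid (n : nat) (Y : 'I_n -> 'rV[R]_d) : 'rV[R]_d :=
  (n%:R)^-1 *: \sum_(i < n) Y i.

Definition PhiP (p : 'rV[R]_d) (n : nat) (Y : 'I_n -> 'rV[R]_d) : R :=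
  \sum_(i < n) sqnorm (Y i - p).

Definition Delta (n : nat) (Y : 'I_n -> 'rV[R]_d) : R :=
  \sum_(i < n) sqnorm (Y i - centroid Y).

Definition mindist (C : seq 'rV[R]_d) (x : 'rV[R]_d) : R :=
  \big[Order.min/sqnorm (x - head 0 C)]_(c <- C) sqnorm (x - c).

Definition PhiC (C : seq 'rV[R]_d) (n : nat) (Y : 'I_n -> 'rV[R]_d) : R :=
  \sum_(i < n) mindist C (Y i).

End Defs.

(* Write a_i = ||x_i - c(x_i)||^2 and let S be the set of near points.  The
   parallel axis theorem Phi(p, Y) = Delta(Y) + n ||p - mu(Y)||^2 shows that
   moving the points of X by a total squared displacement D changes Delta and
   the centroid only by O(D), so it suffices to show D = sum_(i in S) a_i is at
   most eps^2/5 Delta(X).  If x_i is near, then c(x_i) is a candidate centre for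
   every x_k, so a_k <= 2 ||x_k - x_i||^2 + 2 R^2; summing over k and over the
   near i gives |S| (Phi(C, X)/2 - n R^2) <= sum_(i,k) ||x_k - x_i||^2
   <= 4 n Delta(X), while D <= |S| R^2.  Eliminating |S| bounds D by
   8 alpha / (1 - 2 alpha) Delta(X), where alpha = eps^2/41. *)
From HB Require Import structures.
From mathcomp Require Import all_boot all_order all_algebra.
From mathcomp Require Import ring lra.
Import Order.TTheory GRing.Theory Num.Theory.
Set Implicit Arguments. Unset Strict Implicit.
Local Open Scope ring_scope.

Section SquaredNorm.
Variables (R : rcfType) (d : nat).
Implicit Types u v : 'rV[R]_d.

Lemma sqnorm_ge0 v : 0 <= sqnorm v.
Proof. by apply: sumr_ge0 => j _; apply: sqr_ge0. Qed.

Lemma sqnorm0 : sqnorm (0 : 'rV[R]_d) = 0.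
Proof. by apply: big1 => j _; rewrite mxE expr0n. Qed.

Lemma sqnormN v : sqnorm (- v) = sqnorm v.
Proof. by apply: eq_bigr => j _; rewrite mxE sqrrN. Qed.

Lemma sqnormB u v : sqnorm (u - v) = sqnorm (v - u).
Proof. by rewrite -sqnormN opprB. Qed.

Lemma sqnormD_le u v : sqnorm (u + v) <= 2 * sqnorm u + 2 * sqnorm v.
Proof.
rewrite /sqnorm !mulr_sumr -big_split /=; apply: ler_sum => j _.
by rewrite mxE; have := sqr_ge0 (u 0 j - v 0 j); nra.
Qed.

Lemma sqnorm_split_le u v w :
  sqnorm (u - w) <= 2 * sqnorm (u - v) + 2 * sqnorm (v - w).
Proof.
have -> : u - w = (u - v) + (v - w) by rewrite addrA subrK.
exact: sqnormD_le.
Qed.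

Lemma ler_enorm u v : (enorm u <= enorm v) = (sqnorm u <= sqnorm v).
Proof. by rewrite /enorm ler_sqrt // sqnorm_ge0. Qed.

End SquaredNorm.

Section ParallelAxis.
Variables (R : rcfType) (d n : nat).
Hypothesis n_gt0 : (0 < n)%N.
Implicit Types Y Z : 'I_n -> 'rV[R]_d.

Lemma sum_sqr_sub_mean (y : 'I_n -> R) (p : R) :
  let m := n%:R^-1 * \sum_k y k in
  \sum_i (y i - p) ^+ 2 = \sum_i (y i - m) ^+ 2 + n%:R * (m - p) ^+ 2.
Proof.
move=> m; have n_neq0 : (n%:R : R) != 0 by rewrite pnatr_eq0 -lt0n.
have sum_dev0 : \sum_i (y i - m) = 0.
  rewrite sumrB sumr_const card_ord /m -[_ *+ n]mulr_natr mulrAC.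
  by rewrite mulVf // mul1r subrr.
have expand i :
    (y i - p) ^+ 2 = (y i - m) ^+ 2 + 2 * (m - p) * (y i - m) + (m - p) ^+ 2.
  by ring.
rewrite (eq_bigr _ (fun i _ => expand i)).
rewrite !big_split /= -mulr_sumr sum_dev0 mulr0 addr0 sumr_const card_ord.
by rewrite mulr_natl.
Qed.

Lemma PhiP_parallel_axis Y p :
  PhiP p Y = Delta Y + n%:R * sqnorm (p - centroid Y).
Proof.
rewrite /PhiP /Delta /sqnorm.
rewrite (exchange_big _ _ _ _ _ (fun i j => (Y i - p) 0 j ^+ 2)).
rewrite (exchange_big _ _ _ _ _ (fun i j => (Y i - centroid Y) 0 j ^+ 2)).
rewrite mulr_sumr -big_split /=; apply: eq_bigr => j _.
have centroidE : centroid Y 0 j = n%:R^-1 * \sum_k Y k 0 j.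
  by rewrite /centroid mxE summxE.
under eq_bigr => i _ do rewrite !mxE.
rewrite sum_sqr_sub_mean -centroidE; congr (_ + _).
  by apply: eq_bigr => i _; rewrite !mxE.
by rewrite !mxE -sqrrN opprB.
Qed.

Lemma Delta_ge0 Y : 0 <= Delta Y.
Proof. by apply: sumr_ge0 => i _; apply: sqnorm_ge0. Qed.

Lemma Delta_le_PhiP Y p : Delta Y <= PhiP p Y.
Proof.
by rewrite PhiP_parallel_axis lerDl mulr_ge0 ?ler0n ?sqnorm_ge0.
Qed.

Lemma centroid_sqdist_le Y Z :
  n%:R * sqnorm (centroid Y - centroid Z) <= \sum_i sqnorm (Y i - Z i).
Proof.
have := PhiP_parallel_axis (fun i => Y i - Z i) 0.
rewrite /centroid sumrB scalerBr sub0r sqnormN /PhiP.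
under eq_bigr => i _ do rewrite subr0.
by move=> ->; rewrite lerDr Delta_ge0.
Qed.

Lemma Delta_le_perturb Y Z :
  Delta Z <= 2 * Delta Y + 2 * \sum_i sqnorm (Y i - Z i).
Proof.
apply: le_trans (Delta_le_PhiP Z (centroid Y)) _.
rewrite /PhiP /Delta !mulr_sumr -big_split /=; apply: ler_sum => i _.
by rewrite addrC (sqnormB (Y i)); apply: sqnorm_split_le.
Qed.

Lemma pairwise_sqdist_le Y :
  \sum_i \sum_k sqnorm (Y k - Y i) <= 4 * n%:R * Delta Y.
Proof.
pose q i := sqnorm (Y i - centroid Y).
apply: (@le_trans _ _ (\sum_i \sum_k (2 * q k + 2 * q i))).
  apply: ler_sum => i _; apply: ler_sum => k _.
  by rewrite /q (sqnormB (Y i)); apply: sqnorm_split_le.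
have inner i : \sum_k (2 * q k + 2 * q i) = 2 * Delta Y + n%:R * (2 * q i).
  by rewrite big_split /= -mulr_sumr sumr_const card_ord !mulr_natl.
rewrite (eq_bigr _ (fun i _ => inner i)) big_split /= sumr_const card_ord.
rewrite -!mulr_sumr -/(Delta Y) -mulr_natl; lra.
Qed.

Lemma PhiP_perturb Y Z p (gam del : R) :
  0 <= gam -> \sum_i sqnorm (Y i - Z i) <= del * Delta Y ->
  PhiP p Z <= (1 + gam) * Delta Z ->
  PhiP p Y <= (1 + 4 * gam + (4 * gam + 2) * del) * Delta Y.
Proof.
set D := \sum_i _ => gam_ge0 D_le.
rewrite !PhiP_parallel_axis; set nn : R := n%:R => near_Z.
have nn_ge0 : 0 <= nn by rewrite ler0n.
have mu_close := centroid_sqdist_le Y Z.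
have split_p := ler_wpM2l nn_ge0 (sqnorm_split_le p (centroid Z) (centroid Y)).
rewrite (sqnormB (centroid Z)) in split_p.
have := ler_wpM2l gam_ge0 (Delta_le_perturb Y Z).
have := ler_wpM2l (addr_ge0 (mulr_ge0 (ler0n _ 4) gam_ge0) (ler0n _ 2)) D_le.
have := Delta_ge0 Y; rewrite -/D -/nn in mu_close split_p *; lra.
Qed.

End ParallelAxis.

Section NearestCentres.
Variables (R : rcfType) (d n : nat) (X c : 'I_n -> 'rV[R]_d).
Hypothesis c_nearest : forall i k, sqnorm (X k - c k) <= sqnorm (X k - c i).

Let a k := sqnorm (X k - c k).

Variables (S : pred 'I_n) (r2 : R).
Hypothesis near_S : forall i, i \in S -> a i <= r2.

Lemma near_centre_sqdist i k : i \in S -> a k / 2 - r2 <= sqnorm (X k - X i).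
Proof.
move=> /near_S a_i_le.
have := le_trans (c_nearest i k) (sqnorm_split_le (X k) (X i) (c i)).
move: a_i_le; rewrite /a; lra.
Qed.

Lemma near_card_bound :
  #|S|%:R * ((\sum_k a k) / 2 - n%:R * r2) <= 4 * n%:R * Delta X.
Proof.
have sum_lb i : i \in S -> (\sum_k a k) / 2 - n%:R * r2 <= \sum_k sqnorm (X k - X i).
  have -> : (\sum_k a k) / 2 - n%:R * r2 = \sum_k (a k / 2 - r2).
    by rewrite sumrB mulr_suml sumr_const card_ord mulr_natl.
  by move=> iS; apply: ler_sum => k _; apply: near_centre_sqdist.
apply: le_trans (pairwise_sqdist_le X).
rewrite -sum1_card natr_sum mulr_suml big_mkcond /=; apply: ler_sum => i _.
case: ifP => [/sum_lb|_]; first by rewrite mul1r.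
by apply: sumr_ge0 => k _; apply: sqnorm_ge0.
Qed.

Lemma near_cost_le (alpha A : R) : (0 < n)%N ->
  0 <= alpha <= 1 / 2 -> A <= \sum_k a k -> r2 = alpha * (A / n%:R) ->
  (1 / 2 - alpha) * \sum_(i in S) a i <= 4 * alpha * Delta X.
Proof.
move=> n_gt0 /andP[alpha_ge0 alpha_le] A_le r2E.
have nn_gt0 : (0 : R) < n%:R by rewrite ltr0n.
have nr2E : n%:R * r2 = alpha * A by rewrite r2E; field; rewrite lt0r_neq0.
set D := \sum_(i in S) a i; set s : R := #|S|%:R.
have s_ge0 : 0 <= s by rewrite ler0n.
have D_le : n%:R * D <= s * (alpha * A).
  rewrite -nr2E mulrCA ler_pM2l // /s -sum1_card natr_sum mulr_suml.
  by apply: ler_sum => i /near_S; rewrite mul1r.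
have card_bd : s * (A / 2 - alpha * A) <= 4 * n%:R * Delta X.
  apply: le_trans near_card_bound; rewrite -nr2E; apply: ler_wpM2l => //.
  by rewrite lerD2r; lra.
have half_ge0 : 0 <= 1 / 2 - alpha by rewrite subr_ge0.
rewrite -(ler_pM2l nn_gt0).
have := ler_wpM2r half_ge0 D_le; have := ler_wpM2l alpha_ge0 card_bd; lra.
Qed.

End NearestCentres.

Lemma mindist_le (R : rcfType) (d : nat) (C : seq 'rV[R]_d) x y :
  y \in C -> mindist C x <= sqnorm (x - y).
Proof. by move=> yC; apply: ge_bigmin_seq. Qed.

Lemma mindist_ge0 (R : rcfType) (d : nat) (C : seq 'rV[R]_d) x :
  0 <= mindist C x.
Proof. by apply: le_bigmin => [|c _]; apply: sqnorm_ge0. Qed.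

Lemma moved_cost_le (R : realFieldType) (eps D Delta : R) :
  0 < eps -> eps <= 1 / 2 -> 0 <= Delta ->
  (1 / 2 - eps ^+ 2 / 41) * D <= 4 * (eps ^+ 2 / 41) * Delta ->
  D <= eps ^+ 2 / 5 * Delta.
Proof.
move=> eps_gt0 eps_le Delta_ge0 cost.
have half_gt0 : 0 < 1 / 2 - eps ^+ 2 / 41 by rewrite expr2; nra.
have coeff_le : 4 * (eps ^+ 2 / 41) <= (1 / 2 - eps ^+ 2 / 41) * (eps ^+ 2 / 5).
  have e2_le : 0 <= 1 / 2 - eps ^+ 2 by rewrite expr2; nra.
  by have := mulr_ge0 (sqr_ge0 eps) e2_le; lra.
rewrite -(ler_pM2l half_gt0); have := ler_wpM2r Delta_ge0 coeff_le; lra.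
Qed.

Unset Implicit Arguments.

Theorem mainTheorem12 (R : rcfType) (d n : nat) (eps : R)
  (X : 'I_n -> 'rV[R]_d) (C : seq 'rV[R]_d) (c : 'I_n -> 'rV[R]_d)
  (m'' : 'rV[R]_d) :
  0 < eps -> eps <= 1 / 2 ->
  (0 < n)%N -> C != [::] ->
  (forall i, c i \in C) ->
  (forall i y, y \in C -> enorm (X i - c i) <= enorm (X i - y)) ->
  let Rad := Num.sqrt (eps ^+ 2 / 41 * (PhiC C X / n%:R)) in
  let X' := fun i => if enorm (X i - c i) <= Rad then c i else X i in
  PhiP m'' X' <= (1 + eps / 16) * Delta X' ->
  PhiP m'' X <= (1 + eps / 2) * Delta X.
Proof.
move=> eps_gt0 eps_le n_gt0 _ c_in_C c_nearest Rad X' near_m.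
set alpha := eps ^+ 2 / 41; set S := [pred i | enorm (X i - c i) <= Rad].
have c_near i k : sqnorm (X k - c k) <= sqnorm (X k - c i).
  by rewrite -ler_enorm; apply/c_nearest/c_in_C.
have PhiC_ge0 : 0 <= PhiC C X by apply: sumr_ge0 => i _; apply: mindist_ge0.
have PhiC_le : PhiC C X <= \sum_k sqnorm (X k - c k).
  by apply: ler_sum => i _; apply/mindist_le/c_in_C.
have near_S i : i \in S -> sqnorm (X i - c i) <= alpha * (PhiC C X / n%:R).
  by rewrite inE /= /Rad /enorm ler_sqrt // mulr_ge0 ?divr_ge0 ?ler0n ?sqr_ge0.
have moved_costE : \sum_i sqnorm (X i - X' i) = \sum_(i in S) sqnorm (X i - c i).
  rewrite [RHS]big_mkcond; apply: eq_bigr => i _; rewrite /X' inE /=.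
  by case: ifP; rewrite ?subrr ?sqnorm0.
have alpha_half : 0 <= alpha <= 1 / 2 by rewrite /alpha; apply/andP; split; nra.
have := near_cost_le c_near near_S n_gt0 alpha_half PhiC_le (erefl _).
rewrite -moved_costE => cost.
have D_le := moved_cost_le eps_gt0 eps_le (Delta_ge0 X) cost.
apply: le_trans (PhiP_perturb n_gt0 _ D_le near_m) _; first lra.
by apply: ler_wpM2r; rewrite ?Delta_ge0 // expr2; nra.
Qed.
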